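(* Let $N>2$ be an odd positive integer, $K$ a positive integer, and $0<Z_x\le N$, $0<Z_y\le K$ integers. Let $f:\mathbb{Z}_N\to\mathbb{Z}_K$ be such that for all integers $a,b$ with $-Z_x<a<Z_x$, $a\ne0$, $-Z_y<b<Z_y$, the equation $f(x+a)-f(x)=b$ (with $x+a$ computed in $\mathbb{Z}_N$ and the equation in $\mathbb{Z}_K$) has at most one solution $x\in\mathbb{Z}_N$. For $0\le k<N$ let $\mathbf{a}_k=(a_k(0),\dots,a_k(K-1))$ with $a_k(t)=\omega_K^{tf(k)}$. Let $\mathbf{h}_0,\dots,\mathbf{h}_{N-1}$ be unimodular complex sequences of length $N$ such that for all $0\le i\ne j<N$ and all $0\le v<N$, $$\Big|\sum_{n=0}^{N-1}h_i(n)h_j^*(n)\Big|\le 1,\qquad \Big|\sum_{n=0}^{N-1}h_i(n)h_j^*(n)\omega_N^{nv}\Big|<N.$$ For $0\le i<N$ define $\mathbf{s}_i$ of length $NK$ by $s_i(tN+k)=h_i(k)a_k(t)$ for $0\le t<K$, $0\le k<N$, and let $\mathcal{S}=\{\mathbf{s}_0,\dots,\mathbf{s}_{N-1}\}$. Then $\mathcal{S}$ is an aperiodic $(N,NK,\Pi,K+Z_x-1)$-LAZ sequence set with $\Pi=(-Z_x,Z_x)\times(-Z_y,Z_y)$; that is, for all integers $(\tau,v)\in\Pi$: $|\hat{AF}_{\mathbf{s}_i}(\tau,v)|\le K+Z_x-1$ for every $i$ whenever $(\tau,v)\ne(0,0)$, and $|\hat{AF}_{\mathbf{s}_i,\mathbf{s}_j}(\tau,v)|\le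 K+Z_x-1$ for all $i\ne j$.
   Context: $\omega_L=e^{2\pi\sqrt{-1}/L}$, $z^*$ is complex conjugation, and a sequence is unimodular if all entries have modulus 1. For sequences $\mathbf{a},\mathbf{b}$ of length $L$, the aperiodic cross-ambiguity function is $\hat{AF}_{\mathbf{a},\mathbf{b}}(\tau,v)=\sum_{t=0}^{L-1-\tau}a(t)b^*(t+\tau)\omega_L^{vt}$ for $0\le\tau\le L-1$, $\hat{AF}_{\mathbf{a},\mathbf{b}}(\tau,v)=\sum_{t=-\tau}^{L-1}a(t)b^*(t+\tau)\omega_L^{vt}$ for $-L<\tau<0$, and $0$ for $|\tau|\ge L$; $\hat{AF}_{\mathbf{a}}=\hat{AF}_{\mathbf{a},\mathbf{a}}$. A set of $M$ sequences of length $L$ is an $(M,L,\Pi,\hat\theta)$-LAZ aperiodic sequence set if the maximum of $|\hat{AF}_{\mathbf{a}}(\tau,v)|$ over sequences in the set and $(0,0)\ne(\tau,v)\in\Pi$, and of $|\hat{AF}_{\mathbf{a},\mathbf{b}}(\tau,v)|$ over distinct $\mathbf{a},\mathbf{b}$ in the set and $(\tau,v)\in\Pi$, is $\hat\theta$ (here: at most $\hat\theta$). *)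

From HB Require Import structures.
From mathcomp Require Import all_boot all_order all_algebra.
From mathcomp Require Import reals trigo.
From mathcomp Require Import complex.
Set Implicit Arguments. Unset Strict Implicit. Unset Printing Implicit Defensive.
Import Order.TTheory GRing.Theory Num.Theory.
Local Open Scope ring_scope.
Local Open Scope complex_scope.

Definition omega (R : realType) (L : nat) : R[i] :=
  (cos (2 * pi / L%:R)) +i* (sin (2 * pi / L%:R)).

Lemma ord_gt0 (N : nat) (w : 'I_N) : (0 < N)%N.
Proof. exact: leq_ltn_trans (leq0n w) (ltn_ord w). Qed.

Definition ord_of_nat (N : nat) (w : 'I_N) (n : nat) : 'I_N :=
  Ordinal (ltn_pmod n (ord_gt0 w)).

Definition ord_of_int (N : nat) (w : 'I_N) (z : int) : 'I_N :=
  ord_of_nat w `|(z %% N%:Z)%Z|%N.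

Definition addZN (N : nat) (x : 'I_N) (a : int) : 'I_N :=
  ord_of_int x (x%:Z + a).

(* aperiodic cross-ambiguity function of two sequences of length L
   (sequences are functions nat -> R[i], only entries < L are used) *)
Definition AF (R : realType) (L : nat) (a b : nat -> R[i]) (tau v : int) : R[i] :=
  if (0 <= tau)%R then
    \sum_(0 <= t < L - `|tau|%N) a t * (b (t + `|tau|%N)%N)^* * omega R L ^ (v * t%:Z)
  else
    \sum_(`|tau|%N <= t < L) a t * (b (t - `|tau|%N)%N)^* * omega R L ^ (v * t%:Z).

(* the sequences s_i(tN + k) = h_i(k) a_k(t), a_k(t) = omega_K^(t f(k)) *)
Definition seq_s (R : realType) (N K : nat) (f : 'I_N -> 'I_K)
    (h : 'I_N -> nat -> R[i]) (i : 'I_N) (n : nat) : R[i] :=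
  let k := ord_of_nat i n in
  h i k * omega R K ^+ ((n %/ N) * f k)%N.

From HB Require Import structures.
From mathcomp Require Import all_boot all_order all_algebra.
From mathcomp Require Import reals trigo.
From mathcomp Require Import complex.
From mathcomp Require Import ring lra zify.
Import Order.TTheory GRing.Theory Num.Theory.

(* Write n = tN + k with k < N. Then s_i(n) s_j(n + tau)^* omega_NK^(vn), for
   0 <= tau < N, is a unimodular factor depending only on k times w_k^t, where
   w_k = omega_K^(f(k) - f(k + tau) + v); so AF(tau, v) is a sum over k of geometric
   sums of ratio w_k and length K - c_k, with c_k in {0, 1} the carry of k + tau
   and sum_k c_k = tau. Such a sum has modulus K if w_k = 1 and at most c_k
   otherwise. By the difference property of f, w_k = 1 for at most one k if
   tau <> 0, and for none if tau = 0 <> v; hence |AF| <= K + tau <= K + Zx - 1.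
   At (0, 0), AF is K times the correlation of h_i and h_j, of modulus at most K.
   Negative shifts reduce to positive ones by conjugation. *)

Set Implicit Arguments. Unset Strict Implicit. Unset Printing Implicit Defensive.
Local Open Scope ring_scope.

Section ComplexExponential.
Variable R : realType.

Definition expi (x : R) : R[i] := Complex (cos x) (sin x).

Lemma expi0 : expi 0 = 1.
Proof. by rewrite /expi cos0 sin0. Qed.

Lemma expiD x y : expi (x + y) = expi x * expi y.
Proof. by rewrite /expi cosD sinD /=; congr Complex; ring. Qed.

Lemma expiN x : expi (- x) = (expi x)^-1.
Proof. by apply/esym/mulr1_eq; rewrite -expiD subrr expi0. Qed.

Lemma expiX x n : expi x ^+ n = expi (n%:R * x).
Proof.
elim: n => [|n IHn]; first by rewrite mul0r expi0.
by rewrite exprS IHn -expiD -natr1 mulrDl mul1r addrC.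
Qed.

Lemma expiz x (z : int) : expi x ^ z = expi (z%:~R * x).
Proof. by case: z => n; rewrite /exprz expiX // NegzE mulrNz mulNr expiN. Qed.

Lemma conj_expi x : (expi x)^* = expi (- x).
Proof. by rewrite /expi cosN sinN. Qed.

Lemma norm_expi x : `|expi x| = 1.
Proof. by rewrite normc_def /= cos2Dsin2 sqrtr1. Qed.

Lemma cos_neq1 (y : R) : 0 < y < 2 * pi -> cos y != 1.
Proof.
move=> /andP[y_gt0 y_lt2pi]; apply/eqP => cos_y.
have sin_gt0 : 0 < sin (y / 2) by apply: sin_gt0_pi; apply/andP; split; lra.
have : cos y = 1 - 2 * sin (y / 2) ^+ 2.
  rewrite {1}(splitr y) -mulr2n cos_mulr2n cos2sin2 mulr2n; ring.
by rewrite cos_y; nra.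
Qed.

Lemma expi_neq1 (y : R) : 0 < y < 2 * pi -> expi y != 1.
Proof. by move/cos_neq1; apply: contraNneq => /(congr1 (@complex.Re R)) /= ->. Qed.

End ComplexExponential.

Section RootsOfUnity.
Variable R : realType.

Lemma omegaz L (z : int) : omega R L ^ z = expi (z%:~R * (2 * pi / L%:R)).
Proof. exact: expiz. Qed.

Lemma omegaX L n : omega R L ^+ n = expi (n%:R * (2 * pi / L%:R)).
Proof. exact: omegaz L n. Qed.

Lemma norm_omegaz L z : `|omega R L ^ z| = 1.
Proof. by rewrite omegaz norm_expi. Qed.

Lemma conj_omegaz L z : (omega R L ^ z)^* = omega R L ^ (- z).
Proof. by rewrite !omegaz conj_expi mulrNz mulNr. Qed.

Lemma omega_unit L : omega R L \is a GRing.unit.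
Proof. by rewrite unitfE -normr_eq0 (norm_omegaz L 1) oner_eq0. Qed.

Lemma omega_order L : (0 < L)%N -> omega R L ^+ L = 1.
Proof.
move=> L_gt0; rewrite -[_ ^+ L]/(omega R L ^ L%:Z) omegaz.
rewrite [_ * _](_ : _ = pi *+ 2); first by rewrite /expi cos2pi sin2pi.
by rewrite mulr2n; field; rewrite pnatr_eq0 -lt0n.
Qed.

Lemma omegaz_order L z : (0 < L)%N -> (omega R L ^ z) ^+ L = 1.
Proof.
move=> L_gt0; rewrite -[_ ^+ L]/((omega R L ^ z) ^ L%:Z) exprzAC.
by rewrite -[omega R L ^ L%:Z]/(omega R L ^+ L) omega_order // exp1rz.
Qed.

Lemma omega_eq1 K (m : int) : (0 < K)%N -> (omega R K ^ m == 1) = (K %| m)%Z.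
Proof.
move=> K_gt0; have Kz_gt0 : (0 < K%:Z)%R by rewrite ltz_nat.
rewrite {1}(divz_eq m K) exprzDr ?omega_unit // -exprz_exp exprzAC.
rewrite [omega R K ^ K%:Z](omega_order K_gt0) exp1rz mul1r.
apply/idP/dvdz_mod0P; last by move->.
apply: contraTeq => m_modK; rewrite omegaz expi_neq1 //.
have r_gt0 : (0 < m %% K)%Z by rewrite lt0r m_modK modz_ge0 // -lt0n.
have r_ltK : (m %% K < K)%Z by rewrite ltz_pmod.
have r_gt0' : (0 : R) < (m %% K)%Z%:~R by rewrite ltr0z.
have K_gt0' : (0 : R) < K%:R by rewrite ltr0n.
have r_ltK' : (m %% K)%Z%:~R / K%:R < (1 : R).
  by rewrite ltr_pdivrMr // mul1r -[K%:R]/((K%:Z)%:~R) ltr_int.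
have pi_pos := pi_gt0 R.
have rK_gt0 : (0 : R) < (m %% K)%Z%:~R / K%:R by exact: divr_gt0.
rewrite mulrCA -mulrA; apply/andP; split; nra.
Qed.
End RootsOfUnity.

Lemma geom_sum_root_unity (C : idomainType) (w : C) n :
  w != 1 -> w ^+ n = 1 -> \sum_(i < n) w ^+ i = 0.
Proof.
move=> w_neq1 wn; apply/eqP; have := subrX1 w n.
by rewrite wn subrr => /esym/eqP; rewrite mulf_eq0 subr_eq0 (negbTE w_neq1).
Qed.

Lemma norm_geom_sum_root_le (C : numDomainType) (w : C) n c :
  (0 < n)%N -> `|w| = 1 -> w ^+ n = 1 -> (c <= 1)%N ->
  `|\sum_(0 <= t < n - c) w ^+ t| <= (if w == 1 then n else c)%:R.
Proof.
move=> n_gt0 w_norm wn c_le1; case: eqP => [w1|/eqP w_neq1].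
  apply: le_trans (ler_norm_sum _ _ _) _.
  under eq_bigr do rewrite normrX w_norm expr1n.
  by rewrite sumr_const_nat ler_nat subn0 leq_subr.
have := geom_sum_root_unity w_neq1 wn; rewrite -(big_mkord xpredT).
case: c c_le1 => [|[|//]] _ sum0; first by rewrite subn0 sum0 normr0.
move: sum0; rewrite -(prednK n_gt0) big_nat_recr //= subn1 /=.
by move/eqP; rewrite addr_eq0 => /eqP ->; rewrite normrN normrX w_norm expr1n.
Qed.

Lemma divn_addn_ord N (k : 'I_N) s : (s <= N)%N -> ((k + s) %/ N = (N - s <= k))%N.
Proof.
move=> s_leN; have k_ltN := ltn_ord k.
have [le_k|lt_k] := leqP (N - s) k; last by rewrite divn_small //; lia.
apply/eqP; rewrite eqn_leq -ltnS ltn_divLR ?leq_divRL; lia.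
Qed.

Lemma sum_divn_addn N s : (s <= N)%N -> (\sum_(k < N) (k + s) %/ N = s)%N.
Proof.
move=> s_leN; under eq_bigr do rewrite divn_addn_ord //.
rewrite -(big_mkord xpredT (fun k => (N - s <= k : nat))).
rewrite (big_cat_nat (n := N - s)) ?leq_subr //= big1_seq; last first.
  by move=> k /andP[_]; rewrite mem_index_iota => /andP[_ k_lt]; rewrite leqNgt k_lt.
rewrite add0n (eq_big_nat _ _ (F2 := fun _ => 1%N)); last by move=> k /andP[->].
by rewrite sum_nat_const_nat muln1; lia.
Qed.

Lemma sum_if_le (I : finType) (P : pred I) (F G : I -> nat) :
  (\sum_i (if P i then F i else G i) <= \sum_(i in P) F i + \sum_i G i)%N.
Proof.
rewrite [\sum_(i in P) _]big_mkcond -big_split leq_sum //= => i _.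
by rewrite unfold_in; case: (P i); [apply: leq_addr | apply: leq_addl].
Qed.

(* [rewrite rmorphM] would leave the morphism coercion around [Num.conj]. *)
Lemma conjCM (C : numClosedFieldType) (x y : C) : (x * y)^* = x^* * y^*.
Proof. exact: rmorphM. Qed.

Section AmbiguityFunction.
Variables (R : realType) (L : nat) (a b : nat -> R[i]).

Lemma AF_nat (s : nat) v :
  AF L a b s%:Z v = \sum_(0 <= t < L - s) a t * (b (t + s)%N)^* * omega R L ^ (v * t%:Z).
Proof. by []. Qed.

Lemma AF_oppz (s : nat) v : (0 < s)%N ->
  AF L a b (- s%:Z) v = omega R L ^ (v * s%:Z) * (AF L b a s%:Z (- v))^*.
Proof.
move=> s_gt0; rewrite /AF oppr_ge0 lez_nat leqNgt s_gt0 abszN absz_nat /=.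
rewrite rmorph_sum mulr_sumr -{1}[s]add0n big_addn; apply: eq_bigr => t _.
rewrite /= addnK !rmorphM /= conjCK conj_omegaz mulrCA -exprzDr ?omega_unit //.
by rewrite [a _ * _]mulrC PoszD mulrDr mulNr opprK addrC.
Qed.

End AmbiguityFunction.

Lemma addZN_nat N (k : 'I_N) (s : nat) : (addZN k s%:Z : nat) = ((k + s) %% N)%N.
Proof. by rewrite /= -[(k%:Z + s%:Z)]/((k + s)%N%:Z) modz_nat /= modn_mod. Qed.

Lemma addZN0 N (k : 'I_N) : addZN k 0 = k.
Proof. by apply: val_inj; rewrite /= addr0 modz_nat modn_mod modn_small. Qed.

Lemma sum_nat_mul_split (V : nmodType) N K (G : nat -> V) :
  \sum_(0 <= n < N * K) G n = \sum_(0 <= t < K) \sum_(k < N) G (t * N + k)%N.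
Proof.
rewrite mulnC big_nat_mul; apply: eq_bigr => t _.
by rewrite -{1}[(t * N)%N]add0n big_addn mulSn addnK big_mkord; under eq_bigr do rewrite addnC.
Qed.

Section ShiftedSequences.
Variables (R : realType) (N K : nat) (f : 'I_N -> 'I_K) (h : 'I_N -> nat -> R[i]).
Hypotheses (N_gt0 : (0 < N)%N) (K_gt0 : (0 < K)%N).

Local Notation s_ := (seq_s f h).

Definition carry (k : 'I_N) (s : nat) : nat := ((k + s) %/ N)%N.

Definition phase_step (k : 'I_N) (s : nat) (v : int) : int :=
  (f k)%:Z - (f (addZN k s%:Z))%:Z + v.

Lemma seq_sE i t (k : 'I_N) : s_ i (t * N + k)%N = h i k * omega R K ^+ (t * f k)%N.
Proof.
rewrite /seq_s (_ : ord_of_nat i _ = k); last by apply: val_inj; rewrite /= modnMDl modn_small.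
by rewrite divnMDl // divn_small // addn0.
Qed.

Lemma seq_s_shift i t (k : 'I_N) s :
  s_ i (t * N + k + s)%N =
  h i (addZN k s%:Z) * omega R K ^+ ((t + carry k s) * f (addZN k s%:Z))%N.
Proof. by rewrite -seq_sE addZN_nat /carry; congr s_; lia. Qed.

Lemma seq_s_corr_term i j t (k : 'I_N) s v :
  s_ i (t * N + k)%N * (s_ j (t * N + k + s)%N)^* * omega R (N * K) ^ (v * (t * N + k)%N%:Z) =
  h i k * (h j (addZN k s%:Z))^* *
    omega R (N * K) ^ (v * k%:Z - (N * (carry k s * f (addZN k s%:Z)))%N%:Z) *
    (omega R K ^ phase_step k s v) ^+ t.
Proof.
rewrite seq_sE seq_s_shift !omegaX !omegaz expiX conjCM conj_expi.
rewrite -[RHS]mulrA -expiD.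
set A := expi _; set B := expi _; set C := expi _.
transitivity (h i k * (h j (addZN k s%:Z))^* * (A * B * C)); first by ring.
rewrite /A /B /C -!expiD; congr (_ * expi _).
have [Nr Kr] : (N%:R : R) != 0 /\ (K%:R : R) != 0 by rewrite !pnatr_eq0 -!lt0n.
rewrite /phase_step !(intrD, intrM, intrB) -!pmulrn !(natrM, natrD); field.
by rewrite Nr Kr.
Qed.

Lemma AF_seq_s_nat i j s v : (s < N)%N ->
  AF (N * K) (s_ i) (s_ j) s%:Z v =
  \sum_(k < N) h i k * (h j (addZN k s%:Z))^* *
    omega R (N * K) ^ (v * k%:Z - (N * (carry k s * f (addZN k s%:Z)))%N%:Z) *
    \sum_(0 <= t < K - carry k s) (omega R K ^ phase_step k s v) ^+ t.
Proof.
move=> s_ltN; rewrite AF_nat (big_nat_widen _ _ (N * K)) ?leq_subr // big_mkcond.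
rewrite sum_nat_mul_split exchange_big; apply: eq_bigr => k _.
rewrite mulr_sumr [RHS](big_nat_widen _ _ K) ?leq_subr // [RHS]big_mkcond.
apply: eq_big_nat => t /andP[_ t_ltK].
have k_ltN := ltn_ord k.
have -> : (t * N + k < N * K - s)%N = (t < K - carry k s)%N.
  by rewrite /carry; apply/idP/idP; nia.
by case: ifP => // _; rewrite seq_s_corr_term.
Qed.

Lemma AF_seq_s_00 i j :
  AF (N * K) (s_ i) (s_ j) 0 0 = K%:R * \sum_(k < N) h i k * (h j k)^*.
Proof.
rewrite -[AF _ _ _ 0 0]/(AF (N * K) (s_ i) (s_ j) 0%N%:Z 0) AF_seq_s_nat //.
rewrite mulr_sumr; apply: eq_bigr => k _.
rewrite /phase_step /carry !addZN0 addn0 divn_small // subrr addr0 mul0r mul0n muln0.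
rewrite subrr expr0z mulr1 mulrC; congr (_ * _).
by under eq_bigr do rewrite expr0z expr1n; rewrite sumr_const_nat !subn0.
Qed.

Hypothesis h_unimodular : forall i (n : 'I_N), `|h i n| = 1.

Lemma norm_AF_seq_s_nat_le i j s v : (s < N)%N ->
  `|AF (N * K) (s_ i) (s_ j) s%:Z v| <=
    (#|[pred k | (K %| phase_step k s v)%Z]| * K + s)%:R.
Proof.
move=> s_ltN; rewrite AF_seq_s_nat //.
apply: le_trans (ler_norm_sum _ _ _) _.
apply: le_trans (_ : \sum_(k < N)
   (if (K %| phase_step k s v)%Z then K else carry k s)%:R <= _).
  apply: ler_sum => k _.
  rewrite !normrM h_unimodular norm_conjC h_unimodular norm_omegaz !mul1r -(omega_eq1 R) //.
  apply: norm_geom_sum_root_le; rewrite ?norm_omegaz ?omegaz_order //.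
  by rewrite /carry divn_addn_ord ?leq_b1 // ltnW.
rewrite -natr_sum ler_nat; apply: leq_trans (sum_if_le _ _ _) _.
by rewrite sum_nat_const sum_divn_addn // ltnW.
Qed.

Variables Zx Zy : nat.
Hypotheses (Zx_leN : (Zx <= N)%N) (Zy_leK : (Zy <= K)%N).
Hypothesis f_shift_unique : forall a b : int,
  (- Zx%:Z < a < Zx%:Z)%R -> a != 0 -> (- Zy%:Z < b < Zy%:Z)%R ->
  (#|[pred x : 'I_N | ((f (addZN x a))%:Z - (f x)%:Z == b %[mod K%:Z])%Z]| <= 1)%N.
Hypothesis h_cross : forall i j : 'I_N, i != j -> `|\sum_(n < N) h i n * (h j n)^*| <= 1.

Lemma card_phase_step_le1 s v : (0 < s < Zx)%N -> (- Zy%:Z < v < Zy%:Z)%R ->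
  (#|[pred k | (K %| phase_step k s v)%Z]| <= 1)%N.
Proof.
move=> /andP[s_gt0 s_ltZx] v_range.
have s_range : (- Zx%:Z < s%:Z < Zx%:Z)%R by apply/andP; split; lia.
have s_neq0 : s%:Z != 0 by lia.
have := f_shift_unique s_range s_neq0 v_range.
congr (_ <= 1)%N; apply: eq_card => k; rewrite !inE eqz_mod_dvd -rpredN /phase_step.
by rewrite !opprB addrC.
Qed.

Lemma card_phase_step0 v : v != 0 -> (- Zy%:Z < v < Zy%:Z)%R ->
  #|[pred k | (K %| phase_step k 0 v)%Z]| = 0%N.
Proof.
move=> v_neq0 v_range; apply: eq_card0 => k; rewrite !inE /phase_step addZN0 subrr add0r.
have v_lt : (`|v| < Zy)%N by rewrite -ltz_nat abszE ltr_norml.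
by rewrite dvdzE gtnNdvd ?absz_gt0 //; apply: leq_trans v_lt Zy_leK.
Qed.

Lemma norm_AF_seq_s_nat_LAZ i j s v : (s < Zx)%N -> (- Zy%:Z < v < Zy%:Z)%R ->
  [|| s != 0%N, v != 0 | i != j] ->
  `|AF (N * K) (s_ i) (s_ j) s%:Z v| <= (K + Zx - 1)%:R.
Proof.
move=> s_ltZx v_range nontrivial; have s_ltN := leq_trans s_ltZx Zx_leN.
have [s0|s_gt0] := posnP s.
  subst s; have [v0|v_neq0] := eqVneq v 0.
    subst v; have i_neq_j : i != j by move: nontrivial; rewrite !eqxx.
    rewrite AF_seq_s_00 normrM normr_nat.
    apply: le_trans (ler_wpM2l (ler0n _ _) (h_cross i_neq_j)) _.
    by rewrite mulr1 ler_nat; lia.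
  apply: le_trans (norm_AF_seq_s_nat_le _ _ _ s_ltN) _.
  by rewrite card_phase_step0 // ler_nat; lia.
apply: le_trans (norm_AF_seq_s_nat_le _ _ _ s_ltN) _.
have := card_phase_step_le1 (_ : 0 < s < Zx)%N v_range.
by rewrite ler_nat s_gt0 s_ltZx => /(_ isT) card_le1; nia.
Qed.

Lemma norm_AF_seq_s_LAZ i j tau v :
  (- Zx%:Z < tau < Zx%:Z)%R -> (- Zy%:Z < v < Zy%:Z)%R ->
  [|| tau != 0, v != 0 | i != j] ->
  `|AF (N * K) (s_ i) (s_ j) tau v| <= (K + Zx - 1)%:R.
Proof.
move=> tau_range v_range nontrivial; have s_ltZx : (`|tau| < Zx)%N.
  by rewrite -ltz_nat abszE ltr_norml.
have [tau_ge0|tau_lt0] := leP 0 tau.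
  rewrite -(gez0_abs tau_ge0); apply: norm_AF_seq_s_nat_LAZ => //.
  by rewrite absz_eq0.
have tau_neq0 := ltr0_neq0 tau_lt0.
rewrite -[tau]opprK -(ltz0_abs tau_lt0) AF_oppz ?absz_gt0 //.
rewrite normrM norm_omegaz mul1r norm_conjC.
apply: norm_AF_seq_s_nat_LAZ; rewrite ?absz_eq0 ?tau_neq0 //.
by rewrite ltrNl opprK andbC ltrNl.
Qed.
End ShiftedSequences.

(* Under complex_scope, [x^*] denotes [conjc] instead of [Num.conj]; the two are
   convertible. *)
Local Open Scope complex_scope.

Theorem theorem2 (R : realType) (N K Zx Zy : nat)
  (f : 'I_N -> 'I_K) (h : 'I_N -> nat -> R[i]) :
  (2 < N)%N -> odd N -> (0 < K)%N ->
  (0 < Zx)%N -> (Zx <= N)%N -> (0 < Zy)%N -> (Zy <= K)%N ->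
  (forall a b : int, (- Zx%:Z < a < Zx%:Z)%R -> a != 0 -> (- Zy%:Z < b < Zy%:Z)%R ->
     (#|[pred x : 'I_N |
         ((f (addZN x a))%:Z - (f x)%:Z == b %[mod K%:Z])%Z]| <= 1)%N) ->
  (forall (i : 'I_N) (n : 'I_N), `|h i n| = 1) ->
  (forall i j : 'I_N, i != j ->
     `|\sum_(n < N) h i n * (h j n)^*| <= 1) ->
  (forall i j : 'I_N, i != j -> forall v : 'I_N,
     `|\sum_(n < N) h i n * (h j n)^* * omega R N ^+ (n * v)%N| < N%:R) ->
  forall tau v : int, (- Zx%:Z < tau < Zx%:Z)%R -> (- Zy%:Z < v < Zy%:Z)%R ->
    (forall i : 'I_N, (tau, v) != (0, 0) ->
       `|AF (N * K) (seq_s f h i) (seq_s f h i) tau v| <= (K + Zx - 1)%:R) /\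
    (forall i j : 'I_N, i != j ->
       `|AF (N * K) (seq_s f h i) (seq_s f h j) tau v| <= (K + Zx - 1)%:R).
Proof.
move=> N_gt2 _ K_gt0 _ Zx_leN _ Zy_leK f_shift_unique h_unimodular h_cross _.
move=> tau v tau_range v_range; have N_gt0 : (0 < N)%N by apply: ltn_trans N_gt2.
have LAZ := norm_AF_seq_s_LAZ N_gt0 K_gt0 h_unimodular Zx_leN Zy_leK
  f_shift_unique h_cross tau_range v_range.
split=> [i nontrivial | i j i_neq_j]; apply: LAZ; last by rewrite i_neq_j !orbT.
by move: nontrivial; rewrite xpair_eqE negb_and => /orP[] ->; rewrite ?orbT.
Qed.
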